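(* Let $G$ be an acyclic ADT network over $\mathbb F_q$ with sources $S_i$ and destinations $T_j$, and let $\mathcal C$ be a set of connections. For each pair $(i,j)$, let $M_{i,j}$ be the system matrix from the source processes $\mathcal X(S_i)$ to the destination processes $\mathcal Z(T_j)$; it depends on the coefficients $\alpha,\beta,\epsilon$. Suppose there is an assignment of $\alpha,\beta,\epsilon$ such that: (1) $M_{i,j}=0$ for every pair $(S_i,T_j)$ for which no connection from $S_i$ to $T_j$ belongs to $\mathcal C$; (2) for each $T_j$, if $S_{\sigma(1)},\dots,S_{\sigma(K_j)}$ are the sources having a connection to $T_j$ in $\mathcal C$, then the matrix formed by stacking $M_{\sigma(1),j},\dots,M_{\sigma(K_j),j}$ (the system matrix from $\mathcal X(S_{\sigma(1)}),\dots,\mathcal X(S_{\sigma(K_j)})$ to $\mathcal Z(T_j)$) is a nonsingular $|\mathcal Z(T_j)|\times|\mathcal Z(T_j)|$ matrix. Then $(G,\mathcal C)$ is solvable.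
   Context: ADT network model. $G=(\mathcal V,\mathcal E)$ is a directed acyclic network of supernodes, each with input ports $I(V)$ and output ports $O(V)$. Edges go from output ports to input ports of other supernodes. Linear coding over $\mathbb F_q$: - An output port $e\in O(V)$ carries $Y(e)=\sum_{e'\in I(V)}\beta_{(e',e)}Y(e')$. At a source $S_i$, the term $\sum_k\alpha_{(k,e)}X(S_i,k)$ is added, where $\mathcal X(S_i)$ are $S_i$'s independent processes. - An output port sends the same symbol on all of its outgoing edges. - An input port $e'$ receives $Y(e')=\sum_{(e,e')\in\mathcal E}Y(e)$, the sum taken over $\mathbb F_q$. - A destination $T$ outputs $Z(T,k)=\sum_{e'\in I(T)}\epsilon_{(e',(T,k))}Y(e')$. By linearity, $\mathcal Z(T_j)=\sum_i\mathcal X(S_i)M_{i,j}$ for matrices $M_{i,j}$ over $\mathbb F_q$ determined by the coefficients. A connection is a triple $(S_i,T_j,\mathcal X(S_i,T_j))$ with $\mathcal X(S_i,T_j)\subseteq\mathcal X(S_i)$. $(G,\mathcal C)$ is solvable if a single coefficient choice lets every destination recover the processes of all connections it is a receiver of. *)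

From HB Require Import structures.
From mathcomp Require Import all_boot all_order all_algebra.
Set Implicit Arguments. Unset Strict Implicit. Unset Printing Implicit Defensive.
Import GRing.Theory.
Local Open Scope ring_scope.

(* An ADT network: supernodes, ports (each owned by a supernode, either an
   input port or an output port), edges between ports, sources and
   destinations (each attached to a supernode), the number of processes
   |X(S_i)| of each source and the number of outputs |Z(T_j)| of each
   destination. *)
Record adt_network := ADTNetwork {
  node : finType;
  port : finType;
  owner : port -> node;
  is_in : port -> bool;
  edge : rel port;
  src : finType;
  dst : finType;
  src_node : src -> node;
  dst_node : dst -> node;
  nX : src -> nat;
  nZ : dst -> nat }.

Definition node_arc (N : adt_network) : rel (node N) :=
  fun u v => [exists e : port N, exists e' : port N,
                [&& edge e e', owner e == u & owner e' == v]].

Definition acyclic_adt (N : adt_network) : Prop :=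
  (forall e e' : port N, edge e e' ->
      [&& ~~ is_in e, is_in e' & owner e != owner e'])
  /\ (forall u v : node N, node_arc u v -> ~~ connect (@node_arc N) v u).

Section Coding.
Variables (F : finFieldType) (N : adt_network).

Record coeffs := Coeffs {
  alpha : forall s : src N, 'I_(nX s) -> port N -> F;
  beta : port N -> port N -> F;
  eps : forall t : dst N, port N -> 'I_(nZ t) -> F }.

Definition inputs := forall s : src N, 'I_(nX s) -> F.

Definition Ystep (c : coeffs) (x : inputs) (Y : port N -> F) : port N -> F :=
  fun e =>
    if is_in e then \sum_(e0 | edge e0 e) Y e0
    else \sum_(e' | is_in e' && (owner e' == owner e)) beta c e' e * Y e'
       + \sum_(s | src_node s == owner e) \sum_(k < nX s) @alpha c s k e * x s k.

(* Y(e): since the network is acyclic, #|port| iterations reach the unique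
   solution of the recursion *)
Definition Y (c : coeffs) (x : inputs) : port N -> F :=
  iter #|port N| (Ystep c x) (fun _ => 0).

Definition Zout (c : coeffs) (x : inputs) (t : dst N) (l : 'I_(nZ t)) : F :=
  \sum_(e' | is_in e' && (owner e' == dst_node t)) @eps c t e' l * Y c x e'.

Definition unit_in (s : src N) (k : 'I_(nX s)) : inputs :=
  fun s' k' => ((s' == s) && (nat_of_ord k' == nat_of_ord k))%:R.

(* system matrix M_{i,j}: Z(T_j) = sum_i X(S_i) M_{i,j} *)
Definition sysM (c : coeffs) (s : src N) (t : dst N) : 'M[F]_(nX s, nZ t) :=
  \matrix_(k, l) @Zout c (@unit_in s k) t l.

(* a set of connections: conns s t is the set of subsets X(S_s,T_t) of X(S_s)
   such that (S_s, T_t, X(S_s,T_t)) belongs to C *)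
Definition connections := forall (s : src N) (t : dst N), {set {set 'I_(nX s)}}.

(* sources having a connection to t, processes indexed as dependent pairs *)
Definition conn_rows (C : connections) (t : dst N) : pred {s : src N & 'I_(nX s)} :=
  fun sk => C (tag sk) t != set0.

Definition stackM (c : coeffs) (C : connections) (t : dst N)
  : 'M[F]_(#|conn_rows C t|, nZ t) :=
  \matrix_(i, l) let sk := enum_val i in sysM c (tag sk) t (tagged sk) l.

Definition nonsingular_sq (m n : nat) (A : 'M[F]_(m, n)) : Prop :=
  exists h : m = n, castmx (h, erefl n) A \in unitmx.

(* (G, C) is solvable: one choice of coefficients lets every destination
   recover (Z(T) determines) the processes of all connections it receives *)
Definition solvable (C : connections) : Prop :=
  exists c : coeffs,
    forall (t : dst N) (s : src N) (A : {set 'I_(nX s)}), A \in C s t ->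
      forall x x' : inputs,
        (forall l, @Zout c x t l = @Zout c x' t l) ->
        forall k, k \in A -> x s k = x' s k.

End Coding.

From mathcomp Require Import all_boot all_order all_algebra.
Set Implicit Arguments. Unset Strict Implicit. Unset Printing Implicit Defensive.
Import GRing.Theory.
Local Open Scope ring_scope.

(* Every port symbol, hence every destination output, is a linear function of
   the source processes, so Z(T) = sum_i X(S_i) M_{i,T}.  Since the system
   matrices of unconnected sources vanish, Z(T) is the row of connected
   processes times the stacked matrix; this matrix being invertible, Z(T)
   determines all connected processes. *)

Section Superposition.
Variables (F : finFieldType) (N : adt_network) (c : coeffs F N).

Lemma sum_unit_in (P : pred (src N)) (g : forall s : src N, 'I_(nX s) -> F)
    (s : src N) (k : 'I_(nX s)) :
  \sum_(s' | P s') \sum_(k' < nX s') g s' k' * @unit_in F N s k s' k' =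
  if P s then g s k else 0.
Proof.
have sift_k : \sum_(k' < nX s) g s k' * @unit_in F N s k s k' = g s k.
  rewrite (bigD1 k) //= big1 => [|k' ne]; last first.
    by rewrite /unit_in eqxx /= (negbTE (ne : nat_of_ord k' != k)) mulr0.
  by rewrite /unit_in !eqxx mulr1 addr0.
rewrite big_mkcond (bigD1 s) //= [X in _ + X]big1 => [|s' ne]; last first.
  by case: (P s') => //; apply: big1 => k' _; rewrite /unit_in (negbTE ne) mulr0.
by rewrite sift_k addr0.
Qed.

Lemma Ystep_superposition (x : inputs F N)
    (Ys : forall s : src N, 'I_(nX s) -> port N -> F) (e : port N) :
  Ystep c x (fun e0 => \sum_s \sum_(k < nX s) x s k * Ys s k e0) e =
  \sum_s \sum_(k < nX s) x s k * Ystep c (@unit_in F N s k) (Ys s k) e.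
Proof.
rewrite /Ystep; case: (is_in e).
  under [RHS]eq_bigr do under eq_bigr do rewrite mulr_sumr.
  by rewrite exchange_big; apply: eq_bigr => s _; rewrite exchange_big.
under [RHS]eq_bigr do under eq_bigr do rewrite mulrDr.
under [RHS]eq_bigr do rewrite big_split.
rewrite big_split /=; congr (_ + _).
  under eq_bigr do rewrite mulr_sumr; under eq_bigr do under eq_bigr do rewrite mulr_sumr.
  rewrite exchange_big; apply: eq_bigr => s _; rewrite exchange_big.
  apply: eq_bigr => k _; rewrite mulr_sumr.
  by apply: eq_bigr => e' _; rewrite mulrCA.
rewrite big_mkcond; apply: eq_bigr => s _.
under [RHS]eq_bigr do rewrite (sum_unit_in _ (fun s0 k0 => alpha c k0 e)).
case: (src_node s == owner e) => /=; first by apply: eq_bigr => k _; rewrite mulrC.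
by rewrite big1 // => k _; rewrite mulr0.
Qed.

Lemma iter_Ystep_linear (n : nat) (x : inputs F N) (e : port N) :
  iter n (Ystep c x) (fun _ => 0) e =
  \sum_s \sum_(k < nX s) x s k * iter n (Ystep c (@unit_in F N s k)) (fun _ => 0) e.
Proof.
elim: n e => [|n IH] e /=.
  by rewrite big1 // => s _; rewrite big1 // => k _; rewrite mulr0.
rewrite -Ystep_superposition /Ystep; case: (is_in e).
  by apply: eq_bigr => e0 _; rewrite IH.
by congr (_ + _); apply: eq_bigr => e0 _; rewrite IH.
Qed.

End Superposition.

Section DestinationOutputs.
Variables (F : finFieldType) (N : adt_network) (c : coeffs F N).

Lemma Zout_sysM (x : inputs F N) (t : dst N) (l : 'I_(nZ t)) :
  Zout c x l = \sum_s \sum_(k < nX s) x s k * sysM c s t k l.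
Proof.
rewrite /Zout /Y; under eq_bigr do rewrite iter_Ystep_linear mulr_sumr.
under [RHS]eq_bigr do under eq_bigr do rewrite mxE /Zout mulr_sumr.
rewrite exchange_big; apply: eq_bigr => s _; rewrite exchange_big.
apply: eq_bigr => e' _; rewrite mulr_sumr.
by apply: eq_bigr => k _; rewrite mulrCA.
Qed.

Variables (C : connections N) (t : dst N).

Definition conn_row (x : inputs F N) : 'rV[F]_#|conn_rows C t| :=
  \row_i x (tag (enum_val i)) (tagged (enum_val i)).

Lemma Zout_stackM (x : inputs F N) (l : 'I_(nZ t)) :
  (forall s : src N, C s t = set0 -> sysM c s t = 0) ->
  Zout c x l = (conn_row x *m stackM c C t) 0 l.
Proof.
move=> sysM0; rewrite Zout_sysM mxE.
under [RHS]eq_bigr do rewrite !mxE.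
rewrite -(big_enum_val (fun sk : {s : src N & 'I_(nX s)} =>
      x (tag sk) (tagged sk) * sysM c (tag sk) t (tagged sk) l)) /=.
rewrite [RHS]big_mkcond (@sig_big_dep _ _ _ _ (fun s => 'I_(nX s)) xpredT
  (fun _ => xpredT) (fun s k => x s k * sysM c s t k l)) /=.
apply: eq_bigr => -[s k] _; rewrite unfold_in /conn_rows /=.
by case: (eqVneq (C s t) set0) => [/sysM0 -> | //]; rewrite mxE mulr0.
Qed.

Lemma conn_row_eq_at (x x' : inputs F N) :
  conn_row x = conn_row x' ->
  forall (s : src N) (k : 'I_(nX s)), C s t != set0 -> x s k = x' s k.
Proof.
move=> /rowP eqx s k Cst; pose sk := Tagged (fun s => 'I_(nX s)) k.
have sk_conn : sk \in conn_rows C t by rewrite unfold_in.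
by move: (eqx (enum_rank_in sk_conn sk)); rewrite !mxE enum_rankK_in.
Qed.

End DestinationOutputs.

Lemma nonsingular_sq_mulmx_inj (F : finFieldType) (p m n : nat)
    (A : 'M[F]_(m, n)) (u v : 'M[F]_(p, m)) :
  nonsingular_sq A -> u *m A = v *m A -> u = v.
Proof.
case=> eq_mn; case: n / eq_mn A => A; rewrite castmx_id => A_unit.
by apply: row_free_inj; rewrite row_free_unit.
Qed.

Theorem theorem8 (F : finFieldType) (N : adt_network) (C : connections N) :
  acyclic_adt N ->
  (exists c : coeffs F N,
     (forall (s : src N) (t : dst N), C s t = set0 -> sysM c s t = 0%R) /\
     (forall t : dst N, nonsingular_sq (stackM c C t))) ->
  solvable F C.
Proof.
move=> _ [c [sysM0 stack_ns]]; exists c => t s A A_conn x x' eqZ k _.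
have eq_rows : conn_row C t x = conn_row C t x'.
  apply: (nonsingular_sq_mulmx_inj (stack_ns t)); apply/rowP => l.
  by rewrite -!Zout_stackM // => s'; apply: sysM0.
apply: (conn_row_eq_at eq_rows); apply: contraTneq A_conn => ->.
by rewrite inE.
Qed.
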